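(* Let \[G=\langle a,b,c,s,t\mid sas^{-1}=ab,\ sbs^{-1}=b,\ scs^{-1}=c,\ tat^{-1}=ba,\ tbt^{-1}=b,\ tct^{-1}=c\rangle.\] Then: (1) $C_G(s)=\langle aba^{-1},b,c,s\rangle$; (2) $C_G(t)=\langle a^{-1}ba,b,c,t\rangle$; (3) $C_G(b)=\langle b,s,t\rangle$; (4) $C_G(c)=\langle c,s,t\rangle$; (5) $C_G(st^k)=\langle b,c,st^k\rangle$ for all $k\in\mathbb{Z}\setminus\{0\}$.
   Context: $C_G(g)$ denotes the centraliser of $g$ in $G$. The group $G$ is a semidirect product $F(a,b,c)\rtimes F(s,t)$. *)

(* Concrete model of
   G = < a,b,c,s,t | sas^-1=ab, sbs^-1=b, scs^-1=c, tat^-1=ba, tbt^-1=b, tct^-1=c >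
   as the semidirect product F(a,b,c) ⋊ F(s,t), free groups as reduced words. *)
From Stdlib Require Import List.
From mathcomp Require Import all_boot all_algebra.
Set Implicit Arguments. Unset Strict Implicit. Unset Printing Implicit Defensive.

Section FreeGroup.
Variable X : eqType.

(* a letter (x, false) is x, (x, true) is x^-1 *)
Definition letter := (X * bool)%type.
Definition linv (l : letter) : letter := (l.1, ~~ l.2).

Definition reduced (w : seq letter) : bool :=
  sorted (fun l m => m != linv l) w.

Definition push (l : letter) (w : seq letter) : seq letter :=
  match w with
  | m :: w' => if m == linv l then w' else l :: w
  | [::] => [:: l]
  end.

(* product of words u v, freely reduced (v assumed reduced) *)
Definition wmul (u v : seq letter) : seq letter := foldr push v u.
Definition winv (u : seq letter) : seq letter := rev (map linv u).

Lemma push_reduced l w : reduced w -> reduced (push l w).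
Proof.
case: w => [|m w] //= Hw.
case: ifP => Hm.
  by case: w Hw {Hm} => [|m' w] //= /andP [].
by rewrite /= Hm.
Qed.

Lemma wmul_reduced u v : reduced v -> reduced (wmul u v).
Proof. by move=> Hv; elim: u => [|l u IH] //=; apply: push_reduced. Qed.

Definition fgroup := {w : seq letter | reduced w}.

Definition fone : fgroup := exist _ [::] isT.
Definition fmul (x y : fgroup) : fgroup :=
  exist _ (wmul (sval x) (sval y)) (wmul_reduced (sval x) (proj2_sig y)).
Definition finv (x : fgroup) : fgroup :=
  exist _ (wmul (winv (sval x)) [::]) (wmul_reduced (winv (sval x)) (isT : reduced [::])).
Definition fgen (x : X) : fgroup := exist _ [:: (x, false)] isT.

End FreeGroup.

Definition fsubst (X Y : eqType) (f : X -> fgroup Y) (u : fgroup X) : fgroup Y :=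
  foldr (fun l acc => fmul (if l.2 then finv (f l.1) else f l.1) acc)
        (fone Y) (sval u).

(* generators of N = F(a,b,c): 0 = a, 1 = b, 2 = c ;
   generators of H = F(s,t):   0 = s, 1 = t *)
Definition N := fgroup 'I_3.
Definition H := fgroup 'I_2.

Definition na : N := fgen (@Ordinal 3 0 isT).
Definition nb : N := fgen (@Ordinal 3 1 isT).
Definition nc : N := fgen (@Ordinal 3 2 isT).

(* automorphisms of N given by conjugation by s, s^-1, t, t^-1 :
   phi_s : a |-> ab,     b |-> b, c |-> c
   phi_s^-1 : a |-> ab^-1
   phi_t : a |-> ba,     b |-> b, c |-> c
   phi_t^-1 : a |-> b^-1 a *)
Definition phi_letter (l : letter 'I_2) : N -> N :=
  fsubst (fun x : 'I_3 =>
    if nat_of_ord x == 0 then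
      match nat_of_ord l.1, l.2 with
      | 0, false => fmul na nb
      | 0, true  => fmul na (finv nb)
      | _, false => fmul nb na
      | _, true  => fmul (finv nb) na
      end
    else fgen x).

Definition phi (h : H) (n : N) : N := foldr phi_letter n (sval h).

Definition G := (N * H)%type.

Definition gone : G := (fone _, fone _).
Definition gmul (x y : G) : G := (fmul x.1 (phi x.2 y.1), fmul x.2 y.2).
Definition ginv (x : G) : G := (phi (finv x.2) (finv x.1), finv x.2).

Definition ga : G := (na, fone _).
Definition gb : G := (nb, fone _).
Definition gc : G := (nc, fone _).
Definition gs : G := (fone _, fgen (@Ordinal 2 0 isT)).
Definition gt : G := (fone _, fgen (@Ordinal 2 1 isT)).

Definition gexpz (g : G) (k : int) : G :=
  match k with
  | Posz n => iter n (gmul g) gone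
  | Negz n => iter n.+1 (gmul (ginv g)) gone
  end.

Definition in_gen (S : seq G) (g : G) : Prop :=
  exists w : seq (G * bool),
    (forall p, In p w -> In p.1 S) /\
    g = foldr (fun p acc => gmul (if p.2 then ginv p.1 else p.1) acc) gone w.

Definition centraliser (x : G) (g : G) : Prop := gmul g x = gmul x g.

(* Elements of G are pairs (n, h) with n in N = F(a,b,c) and h in H = F(s,t),
   and H acts on N by phi, fixing b and c.  An element (n, h) commutes with (1, z)
   iff phi z fixes n and h commutes with z, and it commutes with (n', 1), n' a
   power of b or c, iff n commutes with n'.  Centralisers of primitive elements
   of a free group are cyclic, so everything reduces to the fixed points of the
   automorphisms phi_s, phi_t and phi_(st^k) of N.  Each of them maps a to
   beta a gamma with beta, gamma in <b, c>.  Cutting a reduced word x at its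
   first a-letter, x = U a^e R, the image of x is U beta_e a^e gamma_e phi(R)
   with no cancellation across a^e, so comparing the cut of phi x = x with the
   cut of x peels off a-letters.  For st^k, beta = b^k and gamma = b are both
   nontrivial and no a-letter can survive; for s and t one of them is trivial,
   and the a-letters come in pairs a V a^-1 (resp. a^-1 V a) with V a power
   of b. *)

From HB Require Import structures.
From Stdlib Require Import List.
From mathcomp Require Import all_boot all_algebra zify.

Set Implicit Arguments. Unset Strict Implicit. Unset Printing Implicit Defensive.

Lemma cons_rcons_nseq (T : Type) (m : T) w : m :: w = rcons w m -> w = nseq (size w) m.
Proof. by elim: w => [|m' w IH] //= [<-] /IH {1}->. Qed.

Section ReducedWords.
Variable X : eqType.
Implicit Types (l m : letter X) (u v w : seq (letter X)) (x y : fgroup X).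

Lemma linvK : involutive (@linv X).
Proof. by case=> g []. Qed.

Lemma linv_neq l : linv l != l.
Proof. by case: l => g []; rewrite /linv /= xpair_eqE eqxx. Qed.

Lemma reduced_cons l w : reduced (l :: w) = reduced w && (head l w != linv l).
Proof. by case: w => [|m w] /=; rewrite ?(eq_sym l) ?linv_neq // andbC. Qed.

Lemma push_linvK l w : reduced w -> push l (push (linv l) w) = w.
Proof.
case: w => [|m w] /=; first by rewrite eqxx.
rewrite linvK; case: ifP => [/eqP -> | Hm]; last by rewrite /= eqxx.
by case: w => [|m' w] //= /andP [/negbTE ->].
Qed.

Lemma wmul_cat u v w : wmul (u ++ v) w = wmul u (wmul v w).
Proof. exact: foldr_cat. Qed.

Lemma wmul_push l v w : reduced w -> wmul (push l v) w = push l (wmul v w).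
Proof.
case: v => [|m v] //= Hw; case: ifP => [/eqP -> | _] //=.
by rewrite push_linvK //; apply: wmul_reduced.
Qed.

Lemma wmulA u v w : reduced w -> wmul (wmul u v) w = wmul u (wmul v w).
Proof.
move=> Hw; elim: u => [|l u IH] //=.
by rewrite wmul_push ?IH //; apply: wmul_reduced.
Qed.

Lemma wmul_reducedE u v : reduced (u ++ v) -> wmul u v = u ++ v.
Proof.
elim: u => [|l u IH] //= Huv; rewrite IH; last exact: path_sorted Huv.
by case: (u ++ v) Huv => [|m w] //= /andP [/negbTE ->].
Qed.

Lemma wmul_nil w : reduced w -> wmul w [::] = w.
Proof. by move=> Hw; rewrite wmul_reducedE cats0. Qed.

Lemma winv_cons l w : winv (l :: w) = rcons (winv w) (linv l).
Proof. by rewrite /winv /= rev_cons. Qed.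

Lemma winv_reduced w : reduced w -> reduced (winv w).
Proof.
rewrite /reduced /winv rev_sorted.
elim: w => [|l w IH] //= Hw; have {}IH := IH (path_sorted Hw).
case: w Hw IH => [|m w] //= /andP [Hlm _] ->.
by rewrite andbT linvK eq_sym.
Qed.

Lemma wmulK u w : reduced w -> wmul (winv u) (wmul u w) = w.
Proof.
move=> Hw; elim: u => [|l u IH] //=.
rewrite winv_cons -cats1 wmul_cat /= -{2}[l]linvK push_linvK ?IH //.
exact: wmul_reduced.
Qed.

Lemma wmulVK u w : reduced w -> wmul u (wmul (winv u) w) = w.
Proof.
elim: u w => [|l u IH] //= w Hw.
by rewrite winv_cons -cats1 wmul_cat /= IH ?push_linvK //; apply: push_reduced.
Qed.

Lemma reduced_nseq l n : reduced (nseq n l).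
Proof.
elim: n => [|[|n] IH] //; move: IH; rewrite /reduced /= => ->.
by rewrite andbT eq_sym linv_neq.
Qed.

Lemma wmul_rcons_letter w m l : reduced (rcons w m) ->
  wmul (rcons w m) [:: l] = if l == linv m then w else rcons (rcons w m) l.
Proof.
move=> Hwm; rewrite -cats1 wmul_cat /=; case: ifP => Hl.
  by move: Hwm; rewrite -cats1 => /cat_sorted2 [Hw _]; rewrite wmul_nil.
rewrite wmul_reducedE; first by rewrite -!cats1 -catA.
by rewrite /reduced sorted_cat_cons; apply/andP; split; [exact: Hwm | rewrite /= Hl].
Qed.

Lemma push_cases l w : push l w = l :: w \/ w = linv l :: push l w.
Proof. by case: w => [|m w] /=; [left | case: eqP => [-> | _]; [right | left]]. Qed.

Lemma push_eq_wmul_letter l w : reduced w -> push l w = wmul w [:: l] ->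
  w = nseq (size w) l \/ w = nseq (size w) (linv l).
Proof.
case/lastP: w => [|v e]; first by left.
move=> Hve; rewrite wmul_rcons_letter //.
case: (push_cases l (rcons v e)) => [Ep | Ew]; case: eqP => [El | _] E.
- by rewrite Ep in E; have := congr1 size E; rewrite /= size_rcons; lia.
- by left; apply: cons_rcons_nseq; rewrite -Ep.
- have Ee : e = linv l by rewrite El linvK.
  rewrite E Ee in Ew; have Hv := cons_rcons_nseq (esym Ew).
  by right; rewrite Ee Ew /= {1}Hv.
- by rewrite E in Ew; have := congr1 size Ew; rewrite /= !size_rcons; lia.
Qed.

Lemma fgroup_inj x y : sval x = sval y -> x = y.
Proof. exact: val_inj. Qed.

Lemma val_fmul x y : sval (fmul x y) = wmul (sval x) (sval y).
Proof. by []. Qed.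

Lemma val_finv x : sval (finv x) = winv (sval x).
Proof. by rewrite /= wmul_nil //; exact: winv_reduced (proj2_sig x). Qed.

Lemma fmulA : associative (@fmul X).
Proof. by move=> x y z; apply: fgroup_inj; rewrite !val_fmul wmulA //; exact: proj2_sig z. Qed.

Lemma fmul1g : left_id (fone X) (@fmul X).
Proof. by move=> x; apply: fgroup_inj. Qed.

Lemma fmulg1 : right_id (fone X) (@fmul X).
Proof. by move=> x; apply: fgroup_inj; exact: wmul_nil (proj2_sig x). Qed.

Lemma fmulVg : left_inverse (fone X) (@finv X) (@fmul X).
Proof.
move=> x; apply: fgroup_inj.
by rewrite val_fmul val_finv -{2}(wmul_nil (proj2_sig x)) wmulK.
Qed.

Lemma fmulgV : right_inverse (fone X) (@finv X) (@fmul X).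
Proof.
move=> x; apply: fgroup_inj.
by rewrite val_fmul val_finv -(wmul_nil (winv_reduced (proj2_sig x))) wmulVK.
Qed.

End ReducedWords.

HB.instance Definition _ (X : choiceType) := [Choice of fgroup X by <:].
HB.instance Definition _ (X : choiceType) :=
  isGroup.Build (fgroup X) (@fmulA X) (@fmul1g X) (@fmulg1 X) (@fmulVg X) (@fmulgV X).

Local Open Scope group_scope.

Definition expgz (T : groupType) (x : T) (k : int) : T :=
  match k with Posz n => x ^+ n | Negz n => x ^- n.+1 end.

Lemma gmulf_expgz (T T' : groupType) (f : UMagmaMorphism.type T T') x k :
  f (expgz x k) = expgz (f x) k.
Proof. by case: k => n; rewrite /expgz ?gmulfV gmulfXn. Qed.

(** * Free groups *)

Section FreeGroupTheory.
Variable X : choiceType.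
Implicit Types (l m : letter X) (w : seq (letter X)) (x y : fgroup X).

Definition fletter l : fgroup X := if l.2 then (fgen l.1)^-1 else fgen l.1.

Lemma val_mul x y : sval (x * y) = wmul (sval x) (sval y).
Proof. by []. Qed.

Lemma val_fletter l : sval (fletter l) = [:: l].
Proof. by case: l => g []; rewrite /fletter //= val_finv. Qed.

Lemma fletter_linv l : fletter (linv l) = (fletter l)^-1.
Proof. by case: l => g []; rewrite /fletter /= ?invgK. Qed.

Lemma reduced_cons_val l x : reduced (l :: sval x) = (head l (sval x) != linv l).
Proof. by rewrite reduced_cons (proj2_sig x). Qed.

Lemma val_mul_cat x y : reduced (sval x ++ sval y) -> sval (x * y) = sval x ++ sval y.
Proof. exact: wmul_reducedE. Qed.

Lemma val_fletter_mul l x : reduced (l :: sval x) -> sval (fletter l * x) = l :: sval x.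
Proof. by move=> Hlx; rewrite val_mul_cat val_fletter. Qed.

Lemma fgroup_ind (P : fgroup X -> Prop) :
  P 1 -> (forall l x, reduced (l :: sval x) -> P x -> P (fletter l * x)) ->
  forall x, P x.
Proof.
move=> P1 PM x; have [n] := ubnP (size (sval x)); elim: n x => // n IH x.
case Ex: (sval x) => [|l w] /= Hn; first by rewrite (_ : x = 1) //; exact: fgroup_inj.
have Hlw : reduced (l :: w) by rewrite -Ex; exact: proj2_sig x.
pose y : fgroup X := exist _ w (path_sorted Hlw).
have -> : x = fletter l * y by apply: fgroup_inj; rewrite Ex val_fletter_mul.
exact: PM (IH y Hn).
Qed.

Lemma eq_fmorph (K : groupType) (f g : UMagmaMorphism.type (fgroup X) K) :
  (forall z, f (fgen z) = g (fgen z)) -> f =1 g.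
Proof.
move=> fg; apply: fgroup_ind => [|[z b] x _ IH]; first by rewrite !gmulf1.
by rewrite !gmulfM IH /fletter; case: b; rewrite /= ?gmulfV fg.
Qed.

Definition letters_in (Q : pred X) x := all (fun l => Q l.1) (sval x).

Lemma letters_in1 Q : letters_in Q 1.
Proof. by []. Qed.

Lemma letters_inM Q x y : letters_in Q x -> letters_in Q y -> letters_in Q (x * y).
Proof.
rewrite /letters_in val_mul; elim: (sval x) => [|l w IH] //= /andP [Ql Qw] Qy.
have := IH Qw Qy; case: (wmul w (sval y)) => [|m w'] /=; first by rewrite Ql.
by case: ifP => _ /=; [case/andP | move=> ->; rewrite Ql].
Qed.

Lemma letters_inV Q x : letters_in Q x -> letters_in Q x^-1.
Proof. by rewrite /letters_in val_finv /winv all_rev all_map; apply: sub_all => -[]. Qed.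

Lemma letters_inX Q x n : letters_in Q x -> letters_in Q (x ^+ n).
Proof. by move=> Qx; elim: n => [|n IH]; rewrite ?expgS ?letters_inM. Qed.

Lemma fmorph_id_letters_in (f : UMagmaMorphism.type (fgroup X) (fgroup X)) (Q : pred X) :
  (forall z, Q z -> f (fgen z) = fgen z) -> forall x, letters_in Q x -> f x = x.
Proof.
move=> fQ; apply: fgroup_ind => [|l x Hlx IH]; first by rewrite gmulf1.
rewrite /letters_in val_fletter_mul //= => /andP [Ql Qx].
by rewrite gmulfM IH //; case: l Ql {Hlx} => z [] /= Qz; rewrite /fletter /= ?gmulfV fQ.
Qed.

Lemma val_fletterX l n : sval (fletter l ^+ n) = nseq n l.
Proof.
elim: n => [|n IH]; first by [].
by rewrite expgS val_fletter_mul IH // -[l :: _]/(nseq n.+1 l) reduced_nseq.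
Qed.

Lemma commute_fletter x l : commute x (fletter l) ->
  exists n, x = fletter l ^+ n \/ x = fletter l ^- n.
Proof.
move=> /(congr1 sval); rewrite !val_mul val_fletter => /esym E.
have [Ex | Ex] := push_eq_wmul_letter (proj2_sig x) E; exists (size (sval x)).
  by left; apply: fgroup_inj; rewrite val_fletterX.
by right; apply: fgroup_inj; rewrite -expVgn -fletter_linv val_fletterX.
Qed.

Lemma commute_fgen x z : commute x (fgen z) ->
  exists n, x = fgen z ^+ n \/ x = fgen z ^- n.
Proof. exact: (@commute_fletter x (z, false)). Qed.

Lemma commute_primitive (f g : UMagmaMorphism.type (fgroup X) (fgroup X)) x z l :
  cancel f g -> f z = fletter l -> commute x z ->
  exists n, x = z ^+ n \/ x = z ^- n.
Proof.
move=> fK fz /(gmulf_commute f); rewrite fz => /commute_fletter [n En].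
exists n; rewrite -[x]fK -[z]fK fz.
by case: En => ->; [left | right]; rewrite ?gmulfV gmulfXn.
Qed.


Lemma fletterX_eq1 l n : (fletter l ^+ n == 1) = (n == 0%N).
Proof.
apply/eqP/eqP => [/(congr1 sval) | ->]; last by rewrite expg0.
by rewrite val_fletterX; case: n.
Qed.

Lemma expgz_fletter_eq1 l k :
  (expgz (fletter l) k == 1) = (k == 0%R).
Proof. by case: k => n; rewrite /expgz ?invg_eq1 fletterX_eq1. Qed.

End FreeGroupTheory.

Section Substitution.
Variables (X Y : choiceType) (f : X -> fgroup Y).

Let wsubst (w : seq (letter X)) : fgroup Y :=
  foldr (fun l acc => (if l.2 then (f l.1)^-1 else f l.1) * acc) 1 w.

Lemma wsubst_wmul u v : wsubst (wmul u v) = wsubst u * wsubst v.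
Proof.
elim: u => [|[z b] u IH] /=; first by rewrite mul1g.
rewrite -mulgA -IH; case: (push_cases (z, b) (wmul u v)) => [-> // | Ew].
by rewrite {2}Ew /=; case: b {Ew}; rewrite /= ?mulKg ?mulVKg.
Qed.

Fact fsubst_is_monoid_morphism : monoid_morphism (fsubst f).
Proof. by split=> // x y; exact: wsubst_wmul. Qed.

HB.instance Definition _ :=
  isUMagmaMorphism.Build (fgroup X) (fgroup Y) (fsubst f) fsubst_is_monoid_morphism.

Lemma fsubst_gen z : fsubst f (fgen z) = f z.
Proof. exact: mulg1. Qed.

End Substitution.

(** * Endomorphisms twisting one generator *)

Section ASyllables.
Variables (X : choiceType) (a : X).
Implicit Types (l m : letter X) (u v w : seq (letter X)) (x y U R : fgroup X).

Definition a_free x := letters_in (predC1 a) x.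

Lemma a_freeM x y : a_free x -> a_free y -> a_free (x * y).
Proof. exact: letters_inM. Qed.

Lemma a_freeV x : a_free x -> a_free x^-1.
Proof. exact: letters_inV. Qed.

Definition a_split x U l R := [/\ a_free U, l.1 == a & sval x = sval U ++ l :: sval R].

Lemma a_letter_cases l l0 : l.1 == a -> l0.1 == a -> l = l0 \/ l = linv l0.
Proof. by case: l l0 => z [] [z0 []] /= /eqP -> /eqP ->; by [left | right]. Qed.

Lemma reduced_cat_a_letter u l w : reduced u -> all (fun m => m.1 != a) u ->
  l.1 == a -> reduced (l :: w) -> reduced (u ++ l :: w).
Proof.
move=> + + la Hlw; elim: u => [|m u IH] // Hmu /andP [ma Hu].
rewrite cat_cons reduced_cons (IH (path_sorted Hmu) Hu) /=.
case: u Hmu {IH Hu} => [_ | m' u /andP [] //] /=.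
by apply: contra_neq ma => E; move: la; rewrite E => /eqP.
Qed.

Lemma a_split_cat_inj u l w u' l' w' :
  all (fun m => m.1 != a) u -> all (fun m => m.1 != a) u' -> l.1 == a -> l'.1 == a ->
  u ++ l :: w = u' ++ l' :: w' -> [/\ u = u', l = l' & w = w'].
Proof.
move=> + + la la'; elim: u u' => [|m u IH] [|m' u'] //=.
- by move=> _ _ [-> ->].
- by move=> _ /andP [ma _] [E _]; move: ma; rewrite -E la.
- by move=> /andP [ma _] _ [E _]; move: ma; rewrite E la'.
move=> /andP [_ Hu] /andP [_ Hu'] [-> E].
by case: (IH u' Hu Hu' E) => -> -> ->.
Qed.

Lemma split_first_a_letter w : all (fun m => m.1 != a) w \/
  exists u l r, [/\ w = u ++ l :: r, all (fun m => m.1 != a) u & l.1 == a].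
Proof.
elim: w => [|m w IH]; first by left.
have [ma | ma] := eqVneq m.1 a; first by right; exists [::], m, w; split=> //; apply/eqP.
case: IH => [Hw | [u [l [r [-> Hu la]]]]]; first by left; rewrite /= ma.
by right; exists (m :: u), l, r; split=> //=; rewrite ma.
Qed.

Lemma a_splitP x : a_free x \/ exists U l R, a_split x U l R.
Proof.
have [Hx | [u [l [r [Ex Hu la]]]]] := split_first_a_letter (sval x); first by left.
have /cat_sorted2 [Hu' Hlr] : reduced (u ++ l :: r) by rewrite -Ex; exact: proj2_sig x.
by right; exists (exist _ u Hu'), l, (exist _ r (path_sorted Hlr)).
Qed.

Section Split.
Variables (x U R : fgroup X) (l : letter X).
Hypothesis xUlR : a_split x U l R.

Lemma a_split_reduced : reduced (sval U ++ l :: sval R).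
Proof. by case: xUlR => _ _ <-; exact: proj2_sig x. Qed.

Lemma a_split_reduced_cons : reduced (l :: sval R).
Proof. by case/cat_sorted2: a_split_reduced. Qed.

Lemma a_split_size : size (sval R) < size (sval x).
Proof. by case: xUlR => _ _ ->; rewrite size_cat /= addnS ltnS leq_addl. Qed.

Lemma a_split_mul : x = U * fletter l * R.
Proof.
apply: fgroup_inj; case: xUlR => _ _ ->.
by rewrite -mulgA val_mul_cat val_fletter_mul ?a_split_reduced_cons ?a_split_reduced.
Qed.

Lemma a_split_inj U' l' R' : a_split x U' l' R' -> [/\ U = U', l = l' & R = R'].
Proof.
case=> U'a l'a; case: xUlR => Ua la ->.
by move/(a_split_cat_inj Ua U'a la l'a) => [/fgroup_inj -> -> /fgroup_inj ->].
Qed.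

End Split.

Lemma a_split_build C l T : a_free C -> l.1 == a -> reduced (l :: sval T) ->
  a_split (C * fletter l * T) C l T.
Proof.
move=> Ca la HlT; split=> //; rewrite -mulgA val_mul_cat val_fletter_mul //.
by apply: reduced_cat_a_letter => //; exact: proj2_sig C.
Qed.

End ASyllables.

Section TwistedFixedPoints.
Variables (X : choiceType) (a : X).
Variable psi : UMagmaMorphism.type (fgroup X) (fgroup X).
Hypothesis psi_id : forall z, z != a -> psi (fgen z) = fgen z.
Variables beta gamma : fgroup X.
Hypotheses (beta_a_free : a_free a beta) (gamma_a_free : a_free a gamma).
Hypothesis psi_a : psi (fgen a) = beta * fgen a * gamma.
Implicit Types (l : letter X) (x y P U R : fgroup X).

Definition lfactor l := if l.2 then gamma^-1 else beta.
Definition rfactor l := if l.2 then beta^-1 else gamma.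

Lemma a_free_lfactor l : a_free a (lfactor l).
Proof. by rewrite /lfactor; case: l.2 => //; apply: a_freeV. Qed.

Lemma a_free_rfactor l : a_free a (rfactor l).
Proof. by rewrite /rfactor; case: l.2 => //; apply: a_freeV. Qed.

Lemma lfactor_linv l : lfactor (linv l) = (rfactor l)^-1.
Proof. by case: l => z []; rewrite /lfactor /rfactor /= ?invgK. Qed.

Lemma rfactor_linv l : rfactor (linv l) = (lfactor l)^-1.
Proof. by case: l => z []; rewrite /lfactor /rfactor /= ?invgK. Qed.

Lemma psi_a_free x : a_free a x -> psi x = x.
Proof. exact: fmorph_id_letters_in. Qed.

Lemma psi_fletter l : l.1 == a ->
  psi (fletter l) = lfactor l * fletter l * rfactor l.
Proof.
case: l => z b /= /eqP ->; rewrite /fletter /lfactor /rfactor /=.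
by case: b; rewrite ?gmulfV psi_a // !invgM !mulgA.
Qed.

Lemma psi_a_split_of_reduced P x U l R : a_free a P -> a_split a x U l R ->
  reduced (l :: sval (rfactor l * psi R)) ->
  a_split a (P * psi x) (P * U * lfactor l) l (rfactor l * psi R).
Proof.
move=> Pa xUlR HlT; have [Ua la _] := xUlR.
have -> : P * psi x = P * U * lfactor l * fletter l * (rfactor l * psi R).
  by rewrite {1}(a_split_mul xUlR) !gmulfM (psi_a_free Ua) psi_fletter // !mulgA.
by apply: a_split_build => //; rewrite !a_freeM ?a_free_lfactor.
Qed.

Lemma reduced_cons_rfactor l R : l.1 == a -> reduced (l :: sval R) ->
  reduced (l :: sval (rfactor l * psi R)).
Proof.
have [n] := ubnP (size (sval R)); elim: n R l => // n IH R l HRn la HlR.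
rewrite reduced_cons_val.
have [Ra | [U [l' [R' RUlR']]]] := a_splitP a R.
  have : a_free a (rfactor l * R) by rewrite a_freeM ?a_free_rfactor.
  rewrite psi_a_free // /a_free /letters_in.
  case: (sval _) => [_ | c w /andP [/= ca _]]; first by rewrite eq_sym linv_neq.
  by apply: contra_neq ca => ->; apply/eqP.
have [Ua l'a _] := RUlR'.
have HR'n : size (sval R') < n := leq_trans (a_split_size RUlR') HRn.
have [Ca _ ->] := psi_a_split_of_reduced (a_free_rfactor l) RUlR'
  (IH R' l' HR'n l'a (a_split_reduced_cons RUlR')).
(* The prefix C of the image can only vanish if l' = l^-1 and U = 1, and then
   l :: R would not be reduced. *)
set C := rfactor l * U * lfactor l'.
case EC: (sval C) => [|c w] /=; last first.
  move: Ca; rewrite /a_free /letters_in EC => /andP [/= ca _].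
  by apply: contra_neq ca => ->; apply/eqP.
apply/eqP => l'E; have C1 : C = 1 by exact: fgroup_inj.
have U1 : U = 1.
  apply/eqP; rewrite -(conjg_eq1 _ (rfactor l)^-1) conjgE invgK mulgA.
  by rewrite -lfactor_linv -l'E; apply/eqP.
by move: HlR; case: RUlR' => _ _ ->; rewrite U1 l'E /= eqxx.
Qed.

Lemma psi_a_split P x U l R : a_free a P -> a_split a x U l R ->
  a_split a (P * psi x) (P * U * lfactor l) l (rfactor l * psi R).
Proof.
move=> Pa xUlR; have [_ la _] := xUlR.
exact/psi_a_split_of_reduced/reduced_cons_rfactor/(a_split_reduced_cons xUlR).
Qed.

Lemma psi_fixed_split P x U l R : a_free a P -> a_split a x U l R -> P * psi x = x ->
  P * U * lfactor l = U /\ rfactor l * psi R = R.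
Proof.
move=> Pa xUlR Px; have := psi_a_split Pa xUlR; rewrite Px.
by case/(a_split_inj xUlR) => <- _ <-.
Qed.

Lemma fixed_a_free x : beta != 1 -> gamma != 1 -> psi x = x -> a_free a x.
Proof.
move=> beta1 gamma1 px; have [// | [U [l [R xUlR]]]] := a_splitP a x.
have px1 : 1 * psi x = x by rewrite mul1g.
have [] := psi_fixed_split (letters_in1 _) xUlR px1.
rewrite mul1g => /(canRL (mulKg U)); rewrite mulVg /lfactor => E _.
by case: l.2 E => /eqP; rewrite ?invg_eq1 ?(negbTE gamma1) ?(negbTE beta1).
Qed.

Section OneSidedTwist.
Variable l0 : letter X.
Hypotheses (l0a : l0.1 == a) (lfactor_l0 : lfactor l0 = 1) (rfactor_l0 : rfactor l0 != 1).

Lemma rfactor_l0_mul_neq y : rfactor l0 * y <> y.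
Proof. by move/(canRL (mulgK y)); rewrite mulgV; apply/eqP. Qed.

Lemma fixed_split_letter x U l R : psi x = x -> a_split a x U l R ->
  l = l0 /\ rfactor l0 * psi R = R.
Proof.
move=> px xUlR; have [_ la _] := xUlR.
have px1 : 1 * psi x = x by rewrite mul1g.
have [] := psi_fixed_split (letters_in1 _) xUlR px1.
rewrite mul1g => /(canRL (mulKg U)); rewrite mulVg.
case: (a_letter_cases la l0a) => -> //.
by rewrite lfactor_linv => /eqP; rewrite invg_eq1 (negbTE rfactor_l0).
Qed.

Lemma fixed_decomposition x : psi x = x -> a_free a x \/ exists U V R,
  [/\ a_free a U, commute V (rfactor l0), psi R = R, size (sval R) < size (sval x)
     & x = U * (fletter l0 * V * (fletter l0)^-1) * R].
Proof.
move=> px; have [|[U [l [R xUlR]]]] := a_splitP a x; [by left | right].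
have [Ua _ _] := xUlR; have [El RR] := fixed_split_letter px xUlR.
have [Ra | [V [l' [R' RVlR']]]] := a_splitP a R.
  by move: RR; rewrite psi_a_free // => /rfactor_l0_mul_neq.
have [_ l'a _] := RVlR'; have [VV RR'] := psi_fixed_split (a_free_rfactor l0) RVlR' RR.
have l'E : l' = linv l0.
  case: (a_letter_cases l'a l0a) => // l'l0.
  by move: VV; rewrite l'l0 lfactor_l0 mulg1 => /rfactor_l0_mul_neq.
rewrite l'E lfactor_linv in VV; rewrite l'E rfactor_linv lfactor_l0 invg1 mul1g in RR'.
exists U, V, R'; split=> //.
- by rewrite /commute -{1}VV mulgVK.
- exact: ltn_trans (a_split_size RVlR') (a_split_size xUlR).
by rewrite {1}(a_split_mul xUlR) (a_split_mul RVlR') El l'E fletter_linv !mulgA.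
Qed.

End OneSidedTwist.

End TwistedFixedPoints.

(** * The group G *)

HB.instance Definition _ l := UMagmaMorphism.on (phi_letter l).

Lemma phi_letterK l : cancel (phi_letter (linv l)) (phi_letter l).
Proof.
apply: (@eq_fmorph _ _ (phi_letter l \o phi_letter (linv l)) idfun) => z.
apply: fgroup_inj; apply/eqP.
by case: l => [[[|[|?]] ?] []]; case: z => [[|[|[|?]]] ?] //; vm_compute.
Qed.

Fact phi_is_monoid_morphism h : monoid_morphism (phi h).
Proof.
rewrite /phi; split; first by elim: (sval h) => //= l w ->; rewrite gmulf1.
by move=> x y; elim: (sval h) => //= l w ->; rewrite gmulfM.
Qed.

HB.instance Definition _ h := isUMagmaMorphism.Build N N (phi h) (phi_is_monoid_morphism h).

Lemma phiM h1 h2 n : phi (h1 * h2) n = phi h1 (phi h2 n).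
Proof.
rewrite /phi val_mul; elim: (sval h1) => [|l u IH] //=.
have [Ep | Ew] := push_cases l (wmul u (sval h2)).
  by rewrite Ep /= IH.
by rewrite -IH {2}Ew /= phi_letterK.
Qed.

Lemma phi1 n : phi 1 n = n.
Proof. by []. Qed.

Lemma gmul_pair (x y : G) : gmul x y = (x.1 * phi x.2 y.1, x.2 * y.2).
Proof. by []. Qed.

Lemma gmulA : associative gmul.
Proof. by move=> x y z; rewrite !gmul_pair /= gmulfM phiM !mulgA. Qed.

Lemma gmul1g : left_id gone gmul.
Proof. by move=> x; rewrite gmul_pair /= !mul1g; case: x. Qed.

Lemma gmulg1 : right_id gone gmul.
Proof. by move=> x; rewrite gmul_pair /= gmulf1 !mulg1; case: x. Qed.

Lemma gmulVg : left_inverse gone ginv gmul.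
Proof. by move=> x; rewrite gmul_pair /= -gmulfM !mulVg gmulf1. Qed.

Lemma gmulgV : right_inverse gone ginv gmul.
Proof. by move=> x; rewrite gmul_pair /= -phiM !mulgV. Qed.

HB.instance Definition _ := Choice.copy G (N * H)%type.
HB.instance Definition _ := isGroup.Build G gmulA gmul1g gmulg1 gmulVg gmulgV.

Lemma gexpzE (x : G) k : gexpz x k = expgz x k.
Proof. by case: k => n; rewrite /expgz -?expVgn -iter_mulg_1. Qed.

Lemma gmulE (x y : G) : gmul x y = x * y. Proof. by []. Qed.

Definition inN (n : N) : G := (n, 1).
Definition inH (h : H) : G := (1, h).

Fact inN_is_monoid_morphism : monoid_morphism inN.
Proof. by split=> // n1 n2; rewrite /inN -gmulE gmul_pair /= phi1 mulg1. Qed.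
HB.instance Definition _ := isUMagmaMorphism.Build N G inN inN_is_monoid_morphism.

Fact inH_is_monoid_morphism : monoid_morphism inH.
Proof. by split=> // h1 h2; rewrite /inH -gmulE gmul_pair /= gmulf1 mulg1. Qed.
HB.instance Definition _ := isUMagmaMorphism.Build H G inH inH_is_monoid_morphism.

Lemma pairE (n : N) (h : H) : (n, h) = inN n * inH h :> G.
Proof. by rewrite -gmulE gmul_pair /= gmulf1 mulg1 mul1g. Qed.

Lemma commute_inH (z : H) (n : N) (h : H) :
  commute ((n, h) : G) (inH z) <-> phi z n = n /\ commute h z.
Proof.
rewrite /commute -!gmulE !gmul_pair /= gmulf1 mulg1 mul1g.
split=> [E | [-> E2]]; last by rewrite E2.
by split; [exact: esym (congr1 fst E) | have := congr1 snd E].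
Qed.

Lemma commute_inN (z n : N) (h : H) :
  phi h z = z -> commute ((n, h) : G) (inN z) <-> commute n z.
Proof.
move=> hz; rewrite /commute -!gmulE !gmul_pair /= hz phi1 mulg1.
by rewrite mul1g; split=> [E | ->]; [have := congr1 fst E | ].
Qed.

Lemma commute_inN_inH n (z : H) : phi z n = n -> commute (inN n) (inH z).
Proof. by move=> zn; apply/commute_inH; split=> //; exact/commute_sym/commute1. Qed.

Section GeneratedSubgroup.
Variable S : seq G.
Implicit Types x y : G.

Local Notation gword w :=
  (foldr (fun p acc => gmul (if p.2 then ginv p.1 else p.1) acc) gone w).

Lemma gword_cons p w : gword (p :: w) = (if p.2 then p.1^-1 else p.1) * gword w.
Proof. by []. Qed.

Lemma In_mem x : x \in S -> List.In x S.
Proof. by elim: S => //= y s IH; rewrite inE => /orP [/eqP -> | /IH]; [left | right]. Qed.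

Lemma mem_In x : List.In x S -> x \in S.
Proof. by elim: S => //= y s IH [-> | /IH]; rewrite inE ?eqxx // => ->; rewrite orbT. Qed.

Lemma in_gen1 : in_gen S 1.
Proof. by exists [::]. Qed.

Lemma in_gen_mem x : x \in S -> in_gen S x.
Proof.
move=> /In_mem Sx; exists [:: (x, false)]; split; first by move=> p [<- | []].
by rewrite gword_cons mulg1.
Qed.

Lemma in_gen_memV x : x \in S -> in_gen S x^-1.
Proof.
move=> /In_mem Sx; exists [:: (x, true)]; split; first by move=> p [<- | []].
by rewrite gword_cons mulg1.
Qed.

Lemma in_genM x y : in_gen S x -> in_gen S y -> in_gen S (x * y).
Proof.
case=> u [Su ->] [v [Sv ->]]; exists (u ++ v); split.
  by move=> p Hp; case: (in_app_or _ _ _ Hp) => [/Su | /Sv].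
by elim: u {Su} => [|p u IH]; rewrite ?mul1g // cat_cons !gword_cons -IH mulgA.
Qed.

Lemma in_genV x : in_gen S x -> in_gen S x^-1.
Proof.
case=> w [Sw ->]; elim: w Sw => [|[y b] w IH] Sw; first by rewrite invg1; exact: in_gen1.
rewrite gword_cons invgM; apply: in_genM; first by apply: IH => p Sp; apply: Sw; right.
have /mem_In Sy : List.In y S := Sw (y, b) (or_introl erefl).
by case: b {Sw IH}; rewrite /= ?invgK; [exact: in_gen_mem | exact: in_gen_memV].
Qed.

Lemma in_genX x k : in_gen S x -> in_gen S (x ^+ k).
Proof.
by move=> Sx; elim: k => [|k IH]; rewrite ?expg0 ?expgS; [exact: in_gen1 | exact: in_genM].
Qed.

Lemma in_gen_commute x y : {in S, forall z, commute z x} -> in_gen S y -> commute y x.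
Proof.
move=> Sx [w [Sw ->]]; elim: w Sw => [|[z b] w IH] Sw; first exact/commute_sym/commute1.
have /commute_sym xz : commute z x by apply/Sx/mem_In/(Sw (z, b)); left.
rewrite gword_cons; apply/commute_sym/commuteM; last first.
  by apply/commute_sym/IH => p Sp; apply: Sw; right.
by case: b {Sw IH} => //=; exact: commuteV.
Qed.

Lemma centraliser_in_gen x :
  {in S, forall y, commute y x} -> (forall g, commute g x -> in_gen S g) ->
  forall g, centraliser x g <-> in_gen S g.
Proof. by move=> Sx xS g; split=> [/xS | /(in_gen_commute Sx)]. Qed.

Lemma in_gen_fmorph_powers (T : groupType) (f : UMagmaMorphism.type T G) (z t : T) :
  f z \in S -> (exists m, t = z ^+ m \/ t = z ^- m) -> in_gen S (f t).
Proof.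
move=> Sz [m [-> | ->]]; rewrite ?gmulfV gmulfXn.
  exact/in_genX/in_gen_mem.
exact/in_genV/in_genX/in_gen_mem.
Qed.

End GeneratedSubgroup.

Lemma in_gen_letters_in (X : choiceType) (f : UMagmaMorphism.type (fgroup X) G)
    (Q : pred X) (S : seq G) :
  (forall z, Q z -> f (fgen z) \in S) -> forall x, letters_in Q x -> in_gen S (f x).
Proof.
move=> QS; apply: fgroup_ind => [|[z b] x Hlx IH].
  by rewrite gmulf1 => _; exact: in_gen1.
rewrite /letters_in val_fletter_mul //= => /andP [Qz Qx].
rewrite gmulfM; apply: in_genM; last exact: IH.
case: b {Hlx}; rewrite /fletter /= ?gmulfV; last exact/in_gen_mem/QS.
exact/in_gen_memV/QS.
Qed.

(** * Centralisers in G *)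

Definition ord_a : 'I_3 := @Ordinal 3 0 isT.
Definition ord_s : 'I_2 := @Ordinal 2 0 isT.
Definition ord_t : 'I_2 := @Ordinal 2 1 isT.
Definition sH : H := fgen ord_s.
Definition tH : H := fgen ord_t.

Lemma phi_id h (z : 'I_3) : z != ord_a -> phi h (fgen z) = fgen z.
Proof.
move=> za; rewrite /phi; elim: (sval h) => //= l w ->; rewrite /phi_letter fsubst_gen.
by case: ifP => // /eqP z0; case/eqP: za; apply: val_inj.
Qed.

Lemma phi_nb h : phi h nb = nb. Proof. exact: phi_id. Qed.
Lemma phi_nc h : phi h nc = nc. Proof. exact: phi_id. Qed.

Lemma phi_s_a : phi sH na = 1 * na * nb.
Proof. by apply: fgroup_inj; vm_compute. Qed.

Lemma phi_t_a : phi tH na = nb * na * 1.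
Proof. by apply: fgroup_inj; vm_compute. Qed.

Lemma phi_tV_a : phi tH^-1 na = nb^-1 * na.
Proof. by apply: fgroup_inj; vm_compute. Qed.

Lemma in_gen_a_free S n : gb \in S -> gc \in S -> a_free ord_a n -> in_gen S (inN n).
Proof.
move=> Sb Sc; apply: in_gen_letters_in => z za.
have [-> | ->] : z = Ordinal (isT : 1 < 3) \/ z = Ordinal (isT : 2 < 3).
  by case: z za => [[|[|[|?]]] ?] //= _; [left | right]; apply: val_inj.
- exact: Sb.
- exact: Sc.
Qed.

Lemma in_gen_inH S h : gs \in S -> gt \in S -> in_gen S (inH h).
Proof.
move=> Ss St; apply: (@in_gen_letters_in _ _ predT) => [z _ | ]; last exact: all_predT.
have [-> | ->] : z = Ordinal (isT : 0 < 2) \/ z = Ordinal (isT : 1 < 2).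
  by case: z => [[|[|?]] ?] //=; [left | right]; apply: val_inj.
- exact: Ss.
- exact: St.
Qed.

Lemma commute_inH_in_gen (z : H) S :
  (forall n, phi z n = n -> in_gen S (inN n)) ->
  (forall h, commute h z -> in_gen S (inH h)) ->
  forall g, commute g (inH z) -> in_gen S g.
Proof.
move=> Nz Hz [n h] /commute_inH [/Nz Sn /Hz Sh].
by rewrite pairE; apply: in_genM.
Qed.

Lemma commute_inN_in_gen (z : N) S : (forall h, phi h z = z) ->
  (forall n, commute n z -> in_gen S (inN n)) -> (forall h, in_gen S (inH h)) ->
  forall g, commute g (inN z) -> in_gen S g.
Proof.
move=> zfix Nz SH [n h] /(commute_inN _ (zfix h)) /Nz Sn.
by rewrite pairE; apply: in_genM.
Qed.

Lemma phi_expg_a (z : H) (c : N) n : phi z na = c * na -> phi z c = c ->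
  phi (z ^+ n) na = c ^+ n * na.
Proof.
move=> za zc; elim: n => [|n IH]; first by rewrite !expg0 mul1g.
by rewrite expgS phiM IH gmulfM gmulfXn /= zc za mulgA -expgSr.
Qed.

Lemma phi_expgz_t_a k : phi (expgz tH k) na = expgz nb k * na.
Proof.
case: k => n; rewrite /expgz -?expVgn; apply: phi_expg_a.
- by rewrite phi_t_a mulg1.
- exact: phi_nb.
- exact: phi_tV_a.
- by rewrite gmulfV /= phi_nb.
Qed.

Lemma phi_st_a k : phi (sH * expgz tH k) na = expgz nb k * na * nb.
Proof. by rewrite phiM phi_expgz_t_a gmulfM gmulf_expgz /= phi_nb phi_s_a mul1g mulgA. Qed.

Lemma fixed_st_a_free k n : k != 0%R -> phi (sH * expgz tH k) n = n -> a_free ord_a n.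
Proof.
move=> k0; apply: (fixed_a_free (@phi_id _) _ _ (phi_st_a k)) => //.
- by case: k {k0} => m; rewrite /expgz ?a_freeV //; apply: letters_inX.
- by rewrite -[nb]/(fletter (Ordinal (isT : 1 < 3), false)) expgz_fletter_eq1.
Qed.

Definition twist_s (u : H) : H -> H :=
  fsubst (fun z : 'I_2 => if z == ord_s then sH * u else fgen z).

HB.instance Definition _ u := UMagmaMorphism.on (twist_s u).

Lemma twist_s_s u : twist_s u sH = sH * u.
Proof. by rewrite /twist_s fsubst_gen eqxx. Qed.

Lemma twist_s_t u : twist_s u tH = tH.
Proof. by rewrite /twist_s fsubst_gen. Qed.

Lemma twist_sK k : cancel (twist_s (expgz tH k)^-1) (twist_s (expgz tH k)).
Proof.
have tk u : twist_s u (expgz tH k) = expgz tH k by rewrite gmulf_expgz /= twist_s_t.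
apply: (@eq_fmorph _ _ (twist_s (expgz tH k) \o twist_s (expgz tH k)^-1) idfun).
case=> [[|[|?]] Hz] //=.
- rewrite (_ : Ordinal Hz = ord_s); last exact: val_inj.
  by rewrite twist_s_s gmulfM gmulfV /= twist_s_s tk mulgK.
- rewrite (_ : Ordinal Hz = ord_t); last exact: val_inj.
  by rewrite !twist_s_t.
Qed.

Lemma commute_st h k : commute h (sH * expgz tH k) ->
  exists m, h = (sH * expgz tH k) ^+ m \/ h = (sH * expgz tH k) ^- m.
Proof.
apply: (commute_primitive (twist_sK k) (l := (ord_s, false))).
by rewrite gmulfM gmulf_expgz /= twist_s_s twist_s_t mulgVK.
Qed.

Section OneSidedTwistCentraliser.
Variables (z : H) (beta gamma : N) (l0 : letter 'I_3).
Hypotheses (beta_a_free : a_free ord_a beta) (gamma_a_free : a_free ord_a gamma).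
Hypothesis phi_z_a : phi z na = beta * na * gamma.
Hypotheses (l0a : l0.1 == ord_a) (lfactor_l0 : lfactor beta gamma l0 = 1).
Hypothesis rfactor_l0 : rfactor beta gamma l0 \in [:: nb; nb^-1].
Let y := fletter l0.

Lemma rfactor_l0_commute V : commute V (rfactor beta gamma l0) -> commute V nb.
Proof. by move: rfactor_l0; rewrite !inE => /orP [] /eqP -> // /commuteV; rewrite invgK. Qed.

Lemma phi_conj_l0 : phi z (y * nb * y^-1) = y * nb * y^-1.
Proof.
have rnb := rfactor_l0_commute (commute_refl (rfactor beta gamma l0)).
rewrite !gmulfM gmulfV /= (psi_fletter phi_z_a l0a) lfactor_l0 mul1g phi_nb invgM.
by rewrite !mulgA -(mulgA y) rnb mulgA mulgK.
Qed.

Lemma fixed_in_gen S : gb \in S -> gc \in S -> inN (y * nb * y^-1) \in S ->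
  forall n, phi z n = n -> in_gen S (inN n).
Proof.
move=> Sb Sc Sy n.
have r1 : rfactor beta gamma l0 != 1.
  by move: rfactor_l0; rewrite !inE => /orP [] /eqP ->; rewrite ?invg_eq1.
have conj (u x : N) : u * x * u^-1 = x ^ u^-1 by rewrite conjgE invgK mulgA.
have [k] := ubnP (size (sval n)); elim: k n => // k IH n Hn pn.
have [| [U [V [R [Ua Vr pR HR ->]]]]] :=
  fixed_decomposition (@phi_id z) beta_a_free gamma_a_free phi_z_a l0a lfactor_l0 r1 pn.
  exact: in_gen_a_free.
rewrite 2!gmulfM; apply: in_genM; last exact: IH (leq_trans HR Hn) pR.
apply: in_genM; first exact: in_gen_a_free.
have [m [-> | ->]] := commute_fgen (rfactor_l0_commute Vr).
  by rewrite conj conjXg -conj gmulfXn; apply/in_genX/in_gen_mem.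
by rewrite conj conjVg conjXg -conj gmulfV gmulfXn; apply/in_genV/in_genX/in_gen_mem.
Qed.

Lemma centraliser_one_sided g :
  (forall h, commute h z -> exists m, h = z ^+ m \/ h = z ^- m) ->
  centraliser (inH z) g <-> in_gen [:: inN (y * nb * y^-1); gb; gc; inH z] g.
Proof.
move=> zcent; apply: centraliser_in_gen.
  move=> x; rewrite !inE => /or4P [] /eqP ->; last exact: commute_refl.
  - exact/commute_inN_inH/phi_conj_l0.
  - exact/commute_inN_inH/phi_nb.
  - exact/commute_inN_inH/phi_nc.
apply: commute_inH_in_gen => [|h /zcent].
  by apply: fixed_in_gen; rewrite !inE eqxx ?orbT.
by apply: in_gen_fmorph_powers; rewrite !inE eqxx ?orbT.
Qed.

End OneSidedTwistCentraliser.

Lemma centraliser_s g : centraliser gs g <-> in_gen [:: ga * gb * ga^-1; gb; gc; gs] g.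
Proof.
have -> : ga * gb * ga^-1 = inN (na * nb * na^-1) by rewrite !gmulfM gmulfV.
apply: (@centraliser_one_sided _ 1 nb (ord_a, false) _ _ phi_s_a) => // h.
exact: commute_fgen.
Qed.

Lemma centraliser_t g : centraliser gt g <-> in_gen [:: ga^-1 * gb * ga; gb; gc; gt] g.
Proof.
have -> : ga^-1 * gb * ga = inN (na^-1 * nb * na^-1^-1) by rewrite invgK !gmulfM gmulfV.
apply: (@centraliser_one_sided _ nb 1 (ord_a, true) _ _ phi_t_a) => //.
  by rewrite /lfactor invg1.
by move=> h; exact: commute_fgen.
Qed.

Lemma centraliser_fixed_letter (z : 'I_3) g : z != ord_a ->
  centraliser (inN (fgen z)) g <-> in_gen [:: inN (fgen z); gs; gt] g.
Proof.
move=> za; have zfix h : phi h (fgen z) = fgen z := phi_id h za.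
apply: centraliser_in_gen.
  move=> x; rewrite !inE => /or3P [] /eqP ->; first exact: commute_refl.
  - exact/commute_sym/commute_inN_inH/zfix.
  - exact/commute_sym/commute_inN_inH/zfix.
apply: (commute_inN_in_gen zfix) => [n /commute_fgen | h].
  by apply: in_gen_fmorph_powers; rewrite inE eqxx.
by apply: in_gen_inH; rewrite !inE eqxx ?orbT.
Qed.

Lemma centraliser_st k g : k != 0%R ->
  (centraliser (gs * gexpz gt k) g <-> in_gen [:: gb; gc; gs * gexpz gt k] g).
Proof.
move=> k0; have st : gs * gexpz gt k = inH (sH * expgz tH k).
  by rewrite gexpzE gmulfM gmulf_expgz.
rewrite st; apply: centraliser_in_gen.
  move=> y; rewrite !inE => /or3P [] /eqP ->; last exact: commute_refl.
  - exact/commute_inN_inH/phi_nb.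
  - exact/commute_inN_inH/phi_nc.
apply: commute_inH_in_gen => [n /(fixed_st_a_free k0) na_free | h /commute_st].
  by apply: in_gen_a_free; rewrite ?inE ?eqxx ?orbT.
by apply: in_gen_fmorph_powers; rewrite !inE eqxx ?orbT.
Qed.

Theorem lemma6p3 :
  (forall g : G, centraliser gs g <->
     in_gen [:: gmul (gmul ga gb) (ginv ga); gb; gc; gs] g) /\
  (forall g : G, centraliser gt g <->
     in_gen [:: gmul (gmul (ginv ga) gb) ga; gb; gc; gt] g) /\
  (forall g : G, centraliser gb g <-> in_gen [:: gb; gs; gt] g) /\
  (forall g : G, centraliser gc g <-> in_gen [:: gc; gs; gt] g) /\
  (forall (k : int) (g : G), k != 0%R ->
     (centraliser (gmul gs (gexpz gt k)) g <->
      in_gen [:: gb; gc; gmul gs (gexpz gt k)] g)).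
Proof.
split; first exact: centraliser_s.
split; first exact: centraliser_t.
split; first by move=> g; apply: centraliser_fixed_letter.
split; first by move=> g; apply: centraliser_fixed_letter.
move=> k g; exact: centraliser_st.
Qed.
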